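(* Let $A$ be an associative unital $k$-algebra over a commutative ring $k$. Then $A$ is a left Ore domain if and only if $A$ is a monoform left $A$-module. In this case $A$ is a monoform left $B$-module for every subalgebra $B$ with $L(A)\subseteq B\subseteq\mathrm{End}_k(A)$.
   Context: $L(A)=\{L_a: a\in A\}$ where $L_a(x)=ax$; $A$ is a left $B$-module via $\varphi\cdot a=\varphi(a)$. A left Ore domain is a domain $R$ such that $Ra\cap Rb\neq 0$ for all nonzero $a,b\in R$ (equivalently, a domain of left uniform dimension $1$). A module $M$ is monoform if every nonzero homomorphism $f:N\to M$ from a submodule $N\subseteq M$ is injective. *)

From HB Require Import structures.
From mathcomp Require Import all_boot all_order all_algebra.
Set Implicit Arguments. Unset Strict Implicit. Unset Printing Implicit Defensive.
Import GRing.Theory.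
Local Open Scope ring_scope.

Definition is_domain (R : pzRingType) : Prop :=
  (1 : R) != 0 /\ forall a b : R, a * b = 0 -> a = 0 \/ b = 0.

Definition left_ore_domain (R : pzRingType) : Prop :=
  is_domain R /\
  forall a b : R, a != 0 -> b != 0 ->
    exists x y : R, x * a = y * b /\ x * a != 0.

(* Generic left modules: an abelian group M with an action [act] of the
   elements r of some type Rg satisfying the predicate S (the "ring"). *)

Definition is_submod (Rg : Type) (S : Rg -> Prop) (M : zmodType)
    (act : Rg -> M -> M) (N : M -> Prop) : Prop :=
  [/\ N 0,
      (forall x y, N x -> N y -> N (x - y)) &
      (forall r x, S r -> N x -> N (act r x))].

(* f (only its values on N matter) is a module homomorphism N -> M. *)
Definition is_modhom (Rg : Type) (S : Rg -> Prop) (M : zmodType)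
    (act : Rg -> M -> M) (N : M -> Prop) (f : M -> M) : Prop :=
  (forall x y, N x -> N y -> f (x + y) = f x + f y) /\
  (forall r x, S r -> N x -> f (act r x) = act r (f x)).

Definition monoform (Rg : Type) (S : Rg -> Prop) (M : zmodType)
    (act : Rg -> M -> M) : Prop :=
  forall (N : M -> Prop) (f : M -> M),
    is_submod S act N -> is_modhom S act N f ->
    (exists x, N x /\ f x != 0) ->
    forall x y, N x -> N y -> f x = f y -> x = y.

Definition monoform_left_self (A : pzRingType) : Prop :=
  monoform (fun _ : A => True) (fun a x : A => a * x).

Definition monoform_over (k : pzRingType) (A : lmodType k)
    (B : (A -> A) -> Prop) : Prop :=
  monoform B (fun (phi : A -> A) (x : A) => phi x).

Definition k_linear (k : pzRingType) (A : lmodType k) (phi : A -> A) : Prop :=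
  forall (c : k) (x y : A), phi (c *: x + y) = c *: phi x + phi y.

(* B is a k-subalgebra of End_k(A) (operations pointwise, product = composition)
   containing L(A) = {x |-> a * x : a \in A}. *)
Definition subalg_End_containing_L (k : pzRingType) (A : algType k)
    (B : (A -> A) -> Prop) : Prop :=
  (forall phi, B phi -> k_linear phi) /\
  [/\ B (fun x => x),
      (forall phi psi, B phi -> B psi -> B (fun x => phi x + psi x)),
      (forall (c : k) phi, B phi -> B (fun x => c *: phi x)),
      (forall phi psi, B phi -> B psi -> B (fun x => phi (psi x))) &
      (forall a : A, B (fun x => a * x))].

From HB Require Import structures.
From mathcomp Require Import all_boot all_order all_algebra.
From Stdlib Require Import ClassicalEpsilon.
Set Implicit Arguments.
Unset Strict Implicit.
Import GRing.Theory.
Local Open Scope ring_scope.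

(* If [A] is a left Ore domain and [z != 0] lies in the kernel of a
   homomorphism [f] that does not vanish at [w], then a common nonzero left
   multiple [u z = v w] gives [v (f w) = u (f z) = 0], forcing [v = 0] and
   hence [u z = 0].  Conversely, if [A a] and [A b] meet trivially for some
   nonzero [a] and [b], the projection of [A a + A b] onto [A a] along [A b]
   is a nonzero homomorphism killing [b]; and [x |-> x b] kills [a] whenever
   [a b = 0]. *)

Section ModuleHomomorphism.
Variables (Rg : Type) (S : Rg -> Prop) (M : zmodType) (act : Rg -> M -> M).
Variables (N : M -> Prop) (f : M -> M).
Hypotheses (subN : is_submod S act N) (homf : is_modhom S act N f).

Lemma modhomB x y : N x -> N y -> f (x - y) = f x - f y.
Proof.
case: subN => _ NB _; case: homf => fD _ Nx Ny.
by rewrite -[in f x](subrK y x) (fD (x - y) y) ?addrK //; apply: NB.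
Qed.

Lemma modhom0 : f 0 = 0.
Proof. by case: subN => N0 _ _; have := modhomB N0 N0; rewrite !subrr. Qed.

End ModuleHomomorphism.

Section LeftOreMonoform.
Variables (A : pzRingType) (Rg : Type) (S : Rg -> Prop) (act : Rg -> A -> A).
Hypothesis ore : left_ore_domain A.
Hypothesis act_mull : forall a : A, exists2 r, S r & forall x, act r x = a * x.

Lemma left_ore_modhom_ker0 (N : A -> Prop) (f : A -> A) :
  is_submod S act N -> is_modhom S act N f ->
  (exists w, N w /\ f w != 0) -> forall z, N z -> f z = 0 -> z = 0.
Proof.
move=> subN homf [w [Nw fw_neq0]] z Nz fz0.
have fmull a x : N x -> f (a * x) = a * f x.
  by case: (act_mull a) => r Sr actr Nx; rewrite -!actr homf.2.
apply/eqP/negPn/negP => z_neq0.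
have w_neq0 : w != 0 by apply: contraNneq fw_neq0 => ->; rewrite (modhom0 subN homf).
case: ore => [[_ dom] common_mul].
have [u [v [uz_vw uz_neq0]]] := common_mul _ _ z_neq0 w_neq0.
have : v * f w = 0 by rewrite -fmull // -uz_vw fmull // fz0 mulr0.
case/dom => [v0|fw0]; last by rewrite fw0 eqxx in fw_neq0.
by rewrite uz_vw v0 mul0r eqxx in uz_neq0.
Qed.

Lemma left_ore_monoform : monoform S act.
Proof.
move=> N f subN homf fnz x y Nx Ny fxy.
apply/eqP; rewrite -subr_eq0; apply/eqP.
apply: (left_ore_modhom_ker0 subN homf fnz); first by case: subN => _ NB _; apply: NB.
by rewrite (modhomB subN homf) // fxy subrr.
Qed.

End LeftOreMonoform.

Lemma monoform_self_domain (A : nzRingType) :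
  monoform_left_self A -> is_domain A.
Proof.
move=> mono; split=> [|a b ab0]; first exact: oner_neq0.
case: (eqVneq b 0) => [->|b_neq0]; [by right | left].
have subA : is_submod (fun _ : A => True) (fun r x => r * x) (fun _ => True) by [].
have homb : is_modhom (fun _ : A => True) (fun r x => r * x) (fun _ => True) (fun x => x * b).
  by split=> *; rewrite ?mulrDl ?mulrA.
apply: (mono _ _ subA homb _ a 0) => //; last by rewrite ab0 mul0r.
by exists 1; rewrite mul1r.
Qed.

Section DirectSumProjection.
Variables (A : pzRingType) (a b : A).
Hypothesis direct : forall x y : A, x * a = y * b -> x * a = 0.

Definition left_ideal_sum (z : A) : Prop := exists p : A * A, z = p.1 * a + p.2 * b.

Definition left_summand_proj (z : A) : A :=
  (epsilon (inhabits (0, 0)) (fun p : A * A => z = p.1 * a + p.2 * b)).1 * a.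
Arguments left_summand_proj : simpl never.

Lemma left_summand_projE x y : left_summand_proj (x * a + y * b) = x * a.
Proof.
rewrite /left_summand_proj; set p := epsilon _ _.
have e : x * a + y * b = p.1 * a + p.2 * b.
  by apply: (epsilon_spec _ (fun q : A * A => _ = q.1 * a + q.2 * b)); exists (x, y).
have : (x - p.1) * a = (p.2 - y) * b.
  by apply/eqP; rewrite !mulrBl subr_eq addrAC eq_sym subr_eq addrC e.
by move/direct/eqP; rewrite mulrBl subr_eq0 => /eqP.
Qed.

Lemma left_ideal_sum_submod :
  is_submod (fun _ : A => True) (fun r x => r * x) left_ideal_sum.
Proof.
split; first by exists (0, 0); rewrite !mul0r addr0.
- move=> _ _ [[x1 y1] ->] [[x2 y2] ->]; exists (x1 - x2, y1 - y2).
  by rewrite /= !mulrBl opprD addrACA.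
- by move=> r _ _ [[x y] ->]; exists (r * x, r * y); rewrite /= mulrDr !mulrA.
Qed.

Lemma left_summand_proj_modhom :
  is_modhom (fun _ : A => True) (fun r x => r * x) left_ideal_sum left_summand_proj.
Proof.
split=> [_ _ [[x1 y1] ->] [[x2 y2] ->] | r _ _ [[x y] ->]] /=.
- by rewrite !left_summand_projE addrACA -!mulrDl left_summand_projE.
- by rewrite left_summand_projE mulrDr !mulrA left_summand_projE.
Qed.

Lemma monoform_self_direct_sum :
  monoform_left_self A -> a != 0 -> b = 0.
Proof.
move=> mono a_neq0.
have proj_at (x y : A) : left_ideal_sum (x * a + y * b) by exists (x, y).
have [proja projb proj0] : [/\ left_summand_proj (1 * a + 0 * b) = a,
    left_summand_proj (0 * a + 1 * b) = 0 & left_summand_proj (0 * a + 0 * b) = 0].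
  by rewrite !left_summand_projE mul1r !mul0r.
move: proja projb proj0 (proj_at 1 0) (proj_at 0 1) (proj_at 0 0).
rewrite !mul1r !mul0r !addr0 add0r => proja projb proj0 Na Nb N0.
apply: (mono _ _ left_ideal_sum_submod left_summand_proj_modhom _ _ _ Nb N0).
  by exists a; rewrite proja.
by rewrite projb proj0.
Qed.

End DirectSumProjection.

Lemma monoform_self_left_ore (A : nzRingType) :
  monoform_left_self A -> left_ore_domain A.
Proof.
move=> mono; split; first exact: monoform_self_domain.
move=> a b a_neq0 b_neq0; apply: NNPP => no_common.
suff b0 : b = 0 by rewrite b0 eqxx in b_neq0.
apply: (monoform_self_direct_sum _ mono a_neq0) => x y xa_yb.
by apply/eqP/negPn/negP => xa_neq0; apply: no_common; exists x, y.
Qed.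

Theorem lemma2p3 (k : comPzRingType) (A : algType k) :
  (left_ore_domain A <-> monoform_left_self A) /\
  (left_ore_domain A ->
     forall B : (A -> A) -> Prop, subalg_End_containing_L B ->
       monoform_over B).
Proof.
split; [split|].
- by move=> ore; apply: left_ore_monoform => // a; exists a.
- exact: monoform_self_left_ore.
- move=> ore B [_ [_ _ _ _ BL]].
  by apply: left_ore_monoform => // a; exists (fun x => a * x).
Qed.
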